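(* There exists $\lambda_0>0$ such that for every $\lambda\ge\lambda_0$ the function $\beta\mapsto \rho\,\phi(a)+\gamma\,\Phi(a)$ is strictly increasing on $(0,\infty)$, where $n,\rho,a,\gamma$ are the functions of $(\beta,\lambda)$ defined in the context.
   Context: $\phi$ and $\Phi$ denote the standard normal density and distribution function. For $\lambda>0$ and $\beta\ge 0$ set $n=\lambda+\beta\sqrt{\lambda}$, $\rho=\lambda/n$, $a=\sqrt{-2n(1-\rho+\ln\rho)}$ (note $1-\rho+\ln\rho\le 0$), and $\gamma=(n-\lambda)/\sqrt{n}=\beta\sqrt{\rho}$. *)

From Stdlib Require Import Reals Lra ClassicalEpsilon.
Open Scope R_scope.

Definition phi (x : R) : R := / sqrt (2 * PI) * exp (- x ^ 2 / 2).

Definition RInt_is (f : R -> R) (a b v : R) : Prop :=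
  exists pr : Riemann_integrable f a b, RiemannInt pr = v.

Definition Phi_is (x v : R) : Prop :=
  forall eps, 0 < eps -> exists M0, forall M, M0 <= M ->
    exists w, RInt_is phi (- M) x w /\ Rabs (w - v) < eps.

Definition Phi (x : R) : R := epsilon (inhabits 0) (fun v => Phi_is x v).

Definition nn (lam beta : R) : R := lam + beta * sqrt lam.
Definition rho (lam beta : R) : R := lam / nn lam beta.
Definition aa (lam beta : R) : R :=
  sqrt (- 2 * nn lam beta * (1 - rho lam beta + ln (rho lam beta))).
Definition gam (lam beta : R) : R := (nn lam beta - lam) / sqrt (nn lam beta).

Definition G (lam beta : R) : R :=
  rho lam beta * phi (aa lam beta) + gam lam beta * Phi (aa lam beta).

From Stdlib Require Import Reals Lra ClassicalEpsilon.
From Coquelicot Require Import Coquelicot.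
Open Scope R_scope.

(* Differentiating in beta, with rho' = -lam sqrt(lam) / n^2,
   a' = -sqrt(lam) ln(rho) / a, gamma' = sqrt(lam) (n + lam) / (2 n sqrt n),
   phi' = -x phi and Phi' = phi, the derivative is
     rho' phi(a) + sqrt(lam) (-ln rho) phi(a) (gamma - rho a) / a + gamma' Phi(a).
   The middle term is nonnegative because rho a <= gamma, which after squaring
   is the elementary bound 2 r^2 (r - 1 - ln r) <= (1 - r)^2 for 0 < r <= 1.
   Using phi <= 1 and Phi(a) >= Phi(0) > 0, the last term dominates the first
   as soon as lam > 4 / Phi(0)^2; the mean value theorem then concludes. *)

Lemma is_derive_eq (f : R -> R) (x l l' : R) :
  l = l' -> is_derive f x l -> is_derive f x l'.
Proof. now intros <-. Qed.

Lemma exp_le_mono x y : x <= y -> exp x <= exp y.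
Proof. intros [H | ->]; [left; now apply exp_increasing | lra]. Qed.

Lemma sqrt_2PI_ge_1 : 1 <= sqrt (2 * PI).
Proof. rewrite <- sqrt_1; apply sqrt_le_1_alt; pose proof PI2_1; lra. Qed.

Lemma phi_pos x : 0 < phi x.
Proof.
  pose proof sqrt_2PI_ge_1.
  apply Rmult_lt_0_compat; [apply Rinv_0_lt_compat; lra | apply exp_pos].
Qed.

(* The normalising constant is at least one, so [phi] is dominated by the
   bare Gaussian exponential. *)
Lemma phi_le_exp x : phi x <= exp (- x ^ 2 / 2).
Proof.
  pose proof sqrt_2PI_ge_1; pose proof (exp_pos (- x ^ 2 / 2)).
  assert (/ sqrt (2 * PI) <= 1) by (rewrite <- Rinv_1; apply Rinv_le_contravar; lra).
  unfold phi; nra.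
Qed.

Lemma phi_le_1 x : phi x <= 1.
Proof.
  eapply Rle_trans; [apply phi_le_exp |].
  rewrite <- exp_0; apply exp_le_mono.
  assert (0 <= x ^ 2) by (apply pow2_ge_0). lra.
Qed.

Lemma phi_derive x : is_derive phi x (- x * phi x).
Proof.
  pose proof sqrt_2PI_ge_1.
  unfold phi; auto_derive; [easy |].
  change R in x; replace (x * (x * 1)) with (x ^ 2) by ring.
  unfold Rdiv; set (e := exp _); field; lra.
Qed.

Lemma phi_continuous x : continuous phi x.
Proof. apply (ex_derive_continuous (V := R_NormedModule)); eexists; apply phi_derive. Qed.

Lemma ex_RInt_phi a b : ex_RInt phi a b.
Proof. apply (ex_RInt_continuous (V := R_CompleteNormedModule)); intros; apply phi_continuous. Qed.

(* [left_mass M] is the mass of [phi] on [-M, 0]; it increases with [M] and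
   stays below [e^(1/2)], hence converges, and [Phi x] is its limit plus
   the integral of [phi] over [0, x]. *)
Definition left_mass (M : R) : R := RInt phi (- M) 0.

Lemma left_mass_mono M1 M2 : M1 <= M2 -> left_mass M1 <= left_mass M2.
Proof.
  intros H; unfold left_mass.
  rewrite <- (RInt_Chasles phi (- M2) (- M1) 0) by apply ex_RInt_phi.
  assert (0 <= RInt phi (- M2) (- M1)).
  { apply RInt_ge_0; [lra | apply ex_RInt_phi | intros; left; apply phi_pos]. }
  unfold plus; simpl; lra.
Qed.

(* On [-M, 0] one has [-t^2/2 <= t + 1/2], and [exp (t + 1/2)] integrates
   to at most [e^(1/2)]. *)
Lemma left_mass_le_nonneg M : 0 <= M -> left_mass M <= exp (1 / 2).
Proof.
  intros HM.
  assert (Hexp : is_RInt (fun t => exp (t + 1 / 2)) (- M) 0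
                   (minus (exp (0 + 1 / 2)) (exp (- M + 1 / 2)))).
  { apply (is_RInt_derive (fun t => exp (t + 1 / 2))).
    - intros x _; auto_derive; [easy | ring].
    - intros x _; apply (ex_derive_continuous (V := R_NormedModule)); auto_derive; easy. }
  eapply Rle_trans.
  - apply (RInt_le phi (fun t => exp (t + 1 / 2))); [lra | apply ex_RInt_phi | eexists; exact Hexp |].
    intros x _; eapply Rle_trans; [apply phi_le_exp | apply exp_le_mono].
    assert (0 <= (x + 1) ^ 2) by apply pow2_ge_0. lra.
  - rewrite (is_RInt_unique _ _ _ _ Hexp).
    unfold minus, plus, opp; simpl.
    pose proof (exp_pos (- M + 1 / 2)). replace (0 + 1 / 2) with (1 / 2) by lra. lra.
Qed.

Lemma left_mass_bounded M : left_mass M <= exp (1 / 2).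
Proof.
  eapply Rle_trans; [apply (left_mass_mono M (Rmax M 0)), Rmax_l |].
  apply left_mass_le_nonneg, Rmax_r.
Qed.

Lemma nondecreasing_bounded_limit (f : R -> R) (B : R) :
  (forall x y, x <= y -> f x <= f y) -> (forall x, f x <= B) ->
  exists L, (forall x, f x <= L) /\
    forall eps, 0 < eps -> exists x0, forall x, x0 <= x -> L - eps < f x.
Proof.
  intros Hmono Hbound.
  destruct (completeness (fun y => exists x, y = f x)) as [L [Hub Hleast]].
  - exists B; intros y [x ->]; apply Hbound.
  - exists (f 0), 0; reflexivity.
  - exists L; split; [intros x; apply Hub; now exists x |].
    intros eps Heps; apply NNPP; intros Hnot.
    assert (L <= L - eps); [| lra].
    apply Hleast; intros y [x ->]; apply Rnot_lt_le; intros Hlt.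
    apply Hnot; exists x; intros x' Hx'; specialize (Hmono _ _ Hx'); lra.
Qed.

Lemma RInt_is_phi a b : RInt_is phi a b (RInt phi a b).
Proof.
  exists (ex_RInt_Reals_0 _ _ _ (ex_RInt_phi a b)).
  now rewrite <- RInt_Reals.
Qed.

Lemma RInt_is_phi_unique a b w : RInt_is phi a b w -> w = RInt phi a b.
Proof. intros [pr <-]; now rewrite <- RInt_Reals. Qed.

Lemma RInt_phi_from_left M x : RInt phi (- M) x = left_mass M + RInt phi 0 x.
Proof. unfold left_mass; symmetry; apply (RInt_Chasles phi); apply ex_RInt_phi. Qed.

Lemma Phi_is_unique x v w : Phi_is x v -> Phi_is x w -> v = w.
Proof.
  intros Hv Hw; apply Rminus_diag_uniq; apply NNPP; intros Hne.
  set (d := Rabs (v - w)).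
  assert (Hd : 0 < d) by (apply Rabs_pos_lt; exact Hne).
  destruct (Hv (d / 2)) as [Mv HMv]; [lra |].
  destruct (Hw (d / 2)) as [Mw HMw]; [lra |].
  destruct (HMv (Rmax Mv Mw) (Rmax_l _ _)) as [u [Hu Hu']].
  destruct (HMw (Rmax Mv Mw) (Rmax_r _ _)) as [u2 [Hu2 Hu2']].
  apply RInt_is_phi_unique in Hu; apply RInt_is_phi_unique in Hu2; subst u u2.
  assert (Htri : d <= Rabs (RInt phi (- Rmax Mv Mw) x - w) + Rabs (RInt phi (- Rmax Mv Mw) x - v)).
  { unfold d; replace (v - w) with ((RInt phi (- Rmax Mv Mw) x - w)
                                   - (RInt phi (- Rmax Mv Mw) x - v)) by ring.
    eapply Rle_trans; [apply Rabs_triang | rewrite Rabs_Ropp; lra]. }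
  lra.
Qed.

Lemma Phi_spec x v : Phi_is x v -> Phi x = v.
Proof.
  intros Hv; apply (Phi_is_unique x); [| exact Hv].
  unfold Phi; apply epsilon_spec; now exists v.
Qed.

Lemma Phi_decomposition : exists L, 0 < L /\ forall x, Phi x = L + RInt phi 0 x.
Proof.
  destruct (nondecreasing_bounded_limit left_mass (exp (1 / 2)) left_mass_mono
              left_mass_bounded) as [L [Hub Hlim]].
  exists L; split.
  - assert (0 < left_mass 1); [| specialize (Hub 1); lra].
    apply RInt_gt_0; [lra | intros; apply phi_pos | intros; apply phi_continuous].
  - intros x; apply Phi_spec; intros eps Heps.
    destruct (Hlim eps Heps) as [M0 HM0].
    exists M0; intros M HM; exists (RInt phi (- M) x); split; [apply RInt_is_phi |].
    rewrite RInt_phi_from_left.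
    specialize (HM0 M HM); specialize (Hub M).
    apply Rabs_def1; lra.
Qed.

Lemma Phi_eq x : Phi x = Phi 0 + RInt phi 0 x.
Proof.
  destruct Phi_decomposition as [L [_ HL]].
  rewrite !HL, RInt_point; unfold zero; simpl; ring.
Qed.

Lemma Phi_0_pos : 0 < Phi 0.
Proof.
  destruct Phi_decomposition as [L [HL0 HL]].
  rewrite HL, RInt_point; unfold zero; simpl; lra.
Qed.

Lemma Phi_ge_Phi_0 x : 0 <= x -> Phi 0 <= Phi x.
Proof.
  intros Hx; rewrite (Phi_eq x).
  assert (0 <= RInt phi 0 x); [| lra].
  apply RInt_ge_0; [exact Hx | apply ex_RInt_phi | intros; left; apply phi_pos].
Qed.

(* Fundamental theorem of calculus applied to [Phi_eq]. *)
Lemma Phi_derive x : is_derive Phi x (phi x).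
Proof.
  apply (is_derive_ext (fun y => Phi 0 + RInt phi 0 y)); [intros; symmetry; apply Phi_eq |].
  apply (is_derive_eq _ _ (0 + phi x)); [ring |].
  apply (is_derive_plus (V := R_NormedModule));
    [apply (is_derive_const (K := R_AbsRing) (V := R_NormedModule)) |].
  apply (is_derive_RInt phi (RInt phi 0) 0 x).
  - exists (mkposreal 1 Rlt_0_1); intros y _; apply (RInt_correct (V := R_CompleteNormedModule)), ex_RInt_phi.
  - apply phi_continuous.
Qed.

Lemma ln_lt_sub_1 x : 0 < x -> x <> 1 -> ln x < x - 1.
Proof.
  intros Hx Hx1.
  assert (ln x <> 0) by (intros H; apply Hx1; rewrite <- (exp_ln x), H, exp_0 by exact Hx; reflexivity).
  pose proof (exp_ineq1 (ln x) H); rewrite exp_ln in * by exact Hx; lra.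
Qed.

(* Second-order refinement of [ln r <= r - 1] near [r = 1]: the function
   [(1 - r)^2 - 2 r^2 (r - 1 - ln r)] vanishes at 1 and has derivative
   [-2 (1 - r)^2 - 4 r (r - 1 - ln r) <= 0]. *)
Lemma ln_second_order_bound r : 0 < r <= 1 -> 2 * r ^ 2 * (r - 1 - ln r) <= (1 - r) ^ 2.
Proof.
  intros [Hr [Hr1 | ->]]; [| rewrite ln_1; lra].
  set (h := fun t => (1 - t) ^ 2 - 2 * t ^ 2 * (t - 1 - ln t)).
  destruct (MVT_cor2 h (fun t => - 2 * (1 - t) ^ 2 - 4 * t * (t - 1 - ln t)) r 1 Hr1)
    as [c [Hmvt Hc]].
  { intros c Hc; apply is_derive_Reals; unfold h; auto_derive; [lra | field; lra]. }
  assert (Hln : ln c < c - 1) by (apply ln_lt_sub_1; lra).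
  assert (Hslope : - 2 * (1 - c) ^ 2 - 4 * c * (c - 1 - ln c) <= 0).
  { assert (0 <= (1 - c) ^ 2) by apply pow2_ge_0. nra. }
  assert (h 1 = 0) by (unfold h; rewrite ln_1; ring).
  assert (0 <= h r); [| unfold h in *; lra].
  assert (h 1 - h r <= 0) by (rewrite Hmvt; apply Rmult_le_0_r; lra).
  lra.
Qed.

Section Derivatives.
Variable lam : R.
Hypothesis lam_pos : 0 < lam.

Lemma sqrt_lam_pos : 0 < sqrt lam.
Proof. now apply sqrt_lt_R0. Qed.

Lemma nn_ge_lam b : 0 <= b -> lam <= nn lam b.
Proof. pose proof sqrt_lam_pos; unfold nn; nra. Qed.

Lemma nn_gt_lam b : 0 < b -> lam < nn lam b.
Proof. pose proof sqrt_lam_pos; unfold nn; nra. Qed.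

Lemma rho_pos b : 0 <= b -> 0 < rho lam b.
Proof. intros Hb; pose proof (nn_ge_lam b Hb); apply Rdiv_lt_0_compat; lra. Qed.

Lemma rho_lt_1 b : 0 < b -> rho lam b < 1.
Proof. intros Hb; pose proof (nn_gt_lam b Hb); apply Rlt_div_l; lra. Qed.

Lemma rho_nn b : 0 <= b -> rho lam b * nn lam b = lam.
Proof. intros Hb; pose proof (nn_ge_lam b Hb); unfold rho; field; lra. Qed.

Definition radicand (b : R) : R := - 2 * nn lam b * (1 - rho lam b + ln (rho lam b)).

Lemma radicand_pos b : 0 < b -> 0 < radicand b.
Proof.
  intros Hb; pose proof (nn_gt_lam b Hb); pose proof (rho_pos b (Rlt_le _ _ Hb)).
  pose proof (rho_lt_1 b Hb).
  pose proof (ln_lt_sub_1 (rho lam b) ltac:(lra) ltac:(lra)).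
  unfold radicand; nra.
Qed.

Lemma aa_pos b : 0 < b -> 0 < aa lam b.
Proof. intros Hb; apply sqrt_lt_R0, radicand_pos, Hb. Qed.

Lemma aa_sqr b : 0 < b -> aa lam b * aa lam b = radicand b.
Proof. intros Hb; apply sqrt_sqrt; left; apply radicand_pos, Hb. Qed.

Lemma rho_derive b : 0 <= b -> is_derive (rho lam) b (- lam * sqrt lam / nn lam b ^ 2).
Proof.
  intros Hb; pose proof (nn_ge_lam b Hb).
  unfold rho, nn in *; auto_derive; [lra | field; lra].
Qed.

(* Since [d/drho (rho - 1 - ln rho) = 1 - 1/rho], the derivative of the
   radicand collapses to [-2 sqrt lam ln rho]. *)
Lemma radicand_derive b : 0 <= b -> is_derive radicand b (- 2 * sqrt lam * ln (rho lam b)).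
Proof.
  intros Hb; pose proof (nn_ge_lam b Hb); pose proof (rho_pos b Hb).
  unfold radicand, rho, nn in *; auto_derive; [repeat split; lra |].
  unfold Rdiv; set (L := ln _); field; lra.
Qed.

Lemma aa_derive b : 0 < b -> is_derive (aa lam) b (- sqrt lam * ln (rho lam b) / aa lam b).
Proof.
  intros Hb; pose proof (radicand_pos b Hb); pose proof (aa_pos b Hb).
  assert (Hsqrt : is_derive sqrt (radicand b) (/ (2 * aa lam b))).
  { auto_derive; [lra | apply Rmult_1_l]. }
  apply (is_derive_ext (fun t => sqrt (radicand t))); [reflexivity |].
  eapply is_derive_eq; [| exact (is_derive_comp _ _ _ _ _ Hsqrt (radicand_derive b (Rlt_le _ _ Hb)))].
  unfold scal; simpl; unfold mult; simpl; field; lra.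
Qed.

Lemma gam_derive b : 0 <= b ->
  is_derive (gam lam) b (sqrt lam * (nn lam b + lam) / (2 * nn lam b * sqrt (nn lam b))).
Proof.
  intros Hb; pose proof (nn_ge_lam b Hb).
  assert (0 < sqrt (nn lam b)) by (apply sqrt_lt_R0; lra).
  assert (Hsq : sqrt (nn lam b) * sqrt (nn lam b) = nn lam b) by (apply sqrt_sqrt; lra).
  unfold gam, nn in *; auto_derive; [repeat split; lra |].
  set (S := sqrt (lam + b * sqrt lam)) in *; rewrite <- Hsq; field; lra.
Qed.

(* The comparison [rho a <= gamma]: squaring, [gamma^2 = n (1 - rho)^2] and
   [(rho a)^2 = 2 n rho^2 (rho - 1 - ln rho)]. *)
Lemma rho_aa_le_gam b : 0 < b -> rho lam b * aa lam b <= gam lam b.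
Proof.
  intros Hb; pose proof (nn_gt_lam b Hb) as Hn.
  pose proof (rho_pos b (Rlt_le _ _ Hb)); pose proof (rho_lt_1 b Hb).
  pose proof (aa_pos b Hb); pose proof (rho_nn b (Rlt_le _ _ Hb)) as Hrn.
  assert (Hq : 0 < sqrt (nn lam b)) by (apply sqrt_lt_R0; lra).
  assert (Hqq : sqrt (nn lam b) * sqrt (nn lam b) = nn lam b) by (apply sqrt_sqrt; lra).
  assert (Hgam2 : gam lam b * gam lam b = nn lam b * (1 - rho lam b) ^ 2).
  { unfold gam; set (n := nn lam b) in *; set (r := rho lam b) in *.
    replace ((n - lam) / sqrt n * ((n - lam) / sqrt n))
      with ((n - lam) ^ 2 / (sqrt n * sqrt n)) by (field; lra).
    rewrite Hqq, <- Hrn; field; lra. }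
  assert (Hra2 : (rho lam b * aa lam b) * (rho lam b * aa lam b)
                 = nn lam b * (2 * rho lam b ^ 2 * (rho lam b - 1 - ln (rho lam b)))).
  { replace ((rho lam b * aa lam b) * (rho lam b * aa lam b))
      with (rho lam b ^ 2 * (aa lam b * aa lam b)) by ring.
    rewrite aa_sqr by exact Hb; unfold radicand; ring. }
  pose proof (ln_second_order_bound (rho lam b) ltac:(lra)).
  assert (0 <= gam lam b) by (apply Rdiv_le_0_compat; lra).
  apply Rsqr_incr_0_var; [unfold Rsqr; nra | assumption].
Qed.

(* The derivative of [G] in [beta], grouped so that the middle term is
   visibly nonnegative by [rho_aa_le_gam]. *)
Definition dG (b : R) : R :=
  - lam * sqrt lam / nn lam b ^ 2 * phi (aa lam b)
  + sqrt lam * (- ln (rho lam b)) * phi (aa lam b) * (gam lam b - rho lam b * aa lam b) / aa lam b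
  + sqrt lam * (nn lam b + lam) / (2 * nn lam b * sqrt (nn lam b)) * Phi (aa lam b).

Lemma G_derive b : 0 < b -> is_derive (G lam) b (dG b).
Proof.
  intros Hb; pose proof (aa_pos b Hb); pose proof (aa_derive b Hb) as Ha.
  pose proof (nn_gt_lam b Hb); assert (0 < sqrt (nn lam b)) by (apply sqrt_lt_R0; lra).
  pose proof (is_derive_comp _ _ _ _ _ (phi_derive (aa lam b)) Ha) as Hphi.
  pose proof (is_derive_comp _ _ _ _ _ (Phi_derive (aa lam b)) Ha) as HPhi.
  pose proof (is_derive_mult _ _ _ _ _ (rho_derive b (Rlt_le _ _ Hb)) Hphi
                ltac:(intros; apply Rmult_comm)) as Hrho_phi.
  pose proof (is_derive_mult _ _ _ _ _ (gam_derive b (Rlt_le _ _ Hb)) HPhi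
                ltac:(intros; apply Rmult_comm)) as Hgam_Phi.
  eapply is_derive_eq; [| exact (is_derive_plus (V := R_NormedModule) _ _ _ _ _ Hrho_phi Hgam_Phi)].
  unfold dG, plus, mult, scal; simpl; unfold mult; simpl; field; lra.
Qed.

End Derivatives.

(* Once [C^2 l > 4] and [n >= l], the decay [l / n^2 <= 1 / n] is beaten by
   [C / (2 sqrt n)]. *)
Lemma decay_below C l n : 0 < C -> 4 / C ^ 2 < l -> l <= n -> l / n ^ 2 < C / (2 * sqrt n).
Proof.
  intros HC Hl Hln.
  assert (HC2 : 0 < C ^ 2) by (apply pow_lt, HC).
  assert (Hl0 : 0 < l) by (apply (Rlt_trans _ (4 / C ^ 2)); [apply Rdiv_lt_0_compat; lra | exact Hl]).
  assert (Hq : 0 < sqrt n) by (apply sqrt_lt_R0; lra).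
  assert (Hqq : sqrt n * sqrt n = n) by (apply sqrt_sqrt; lra).
  set (q := sqrt n) in *.
  assert (HCq : 2 < C * q).
  { assert (0 < C * q) by (apply Rmult_lt_0_compat; lra).
    assert (4 < (C * q) * (C * q)); [| nra].
    replace ((C * q) * (C * q)) with (C ^ 2 * n) by (rewrite <- Hqq; ring).
    apply (Rmult_lt_compat_l (C ^ 2)) in Hl; [| exact HC2].
    replace (C ^ 2 * (4 / C ^ 2)) with 4 in Hl by (field; lra). nra. }
  apply (Rmult_lt_reg_r (2 * q * n ^ 2)); [nra |].
  replace (l / n ^ 2 * (2 * q * n ^ 2)) with (2 * q * l) by (field; lra).
  replace (C / (2 * q) * (2 * q * n ^ 2)) with ((C * q) * q * n) by (rewrite <- Hqq; field; lra).
  assert (0 < q * n) by (apply Rmult_lt_0_compat; lra).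
  assert (2 * q * l <= 2 * (q * n)) by nra.
  assert (2 * (q * n) < (C * q) * (q * n)) by (apply Rmult_lt_compat_r; lra).
  lra.
Qed.

(* Positivity of the derivative for [lam > 4 / Phi(0)^2]: the first term of
   [dG] is at least [- sqrt lam * lam / n^2] as [phi <= 1], the second is
   nonnegative by [rho_aa_le_gam], and the third is at least
   [sqrt lam * Phi(0) / (2 sqrt n)] as [Phi(a) >= Phi(0)]. *)
Lemma dG_pos lam b : 4 / Phi 0 ^ 2 < lam -> 0 < b -> 0 < dG lam b.
Proof.
  intros Hlam Hb; pose proof Phi_0_pos as HPhi0.
  assert (Hl0 : 0 < lam).
  { eapply Rlt_trans; [| exact Hlam]; apply Rdiv_lt_0_compat; [lra | apply pow_lt, HPhi0]. }
  pose proof (sqrt_lam_pos lam Hl0) as Hs.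
  pose proof (nn_gt_lam lam Hl0 b Hb) as Hn.
  pose proof (aa_pos lam Hl0 b Hb) as Ha.
  pose proof (rho_lt_1 lam Hl0 b Hb); pose proof (rho_pos lam Hl0 b (Rlt_le _ _ Hb)).
  pose proof (rho_aa_le_gam lam Hl0 b Hb) as Hgam.
  pose proof (decay_below (Phi 0) lam (nn lam b) HPhi0 Hlam (Rlt_le _ _ Hn)) as Hdecay.
  assert (Hq : 0 < sqrt (nn lam b)) by (apply sqrt_lt_R0; lra).
  pose proof (phi_pos (aa lam b)); pose proof (phi_le_1 (aa lam b)).
  pose proof (Phi_ge_Phi_0 (aa lam b) (Rlt_le _ _ Ha)) as HPhi.
  assert (Hln : ln (rho lam b) < 0) by (rewrite <- ln_1; apply ln_increasing; lra).
  unfold dG; set (n := nn lam b) in *; set (s := sqrt lam) in *.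
  set (q := sqrt n) in *; set (p := phi (aa lam b)) in *.
  assert (Hterm1 : - (s * (lam / n ^ 2)) <= - lam * s / n ^ 2 * p).
  { assert (0 <= s * (lam / n ^ 2)) by (apply Rmult_le_pos; [lra | apply Rdiv_le_0_compat; nra]).
    replace (- lam * s / n ^ 2 * p) with (- (s * (lam / n ^ 2)) * p) by (field; lra). nra. }
  assert (Hterm2 : 0 <= s * - ln (rho lam b) * p * (gam lam b - rho lam b * aa lam b) / aa lam b).
  { apply Rdiv_le_0_compat; [| exact Ha].
    apply Rmult_le_pos; [apply Rmult_le_pos; [apply Rmult_le_pos |] |]; lra. }
  assert (Hterm3 : s * (Phi 0 / (2 * q)) <= s * (n + lam) / (2 * n * q) * Phi (aa lam b)).
  { replace (s * (n + lam) / (2 * n * q) * Phi (aa lam b))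
      with (s * ((n + lam) / n * Phi (aa lam b) / (2 * q))) by (field; lra).
    apply Rmult_le_compat_l; [lra |].
    apply Rmult_le_compat_r; [left; apply Rinv_0_lt_compat; lra |].
    assert (1 <= (n + lam) / n) by (apply Rle_div_r; lra). nra. }
  assert (0 < s * (Phi 0 / (2 * q)) - s * (lam / n ^ 2)); [| lra].
  rewrite <- Rmult_minus_distr_l; apply Rmult_lt_0_compat; lra.
Qed.

Theorem lemma3 : exists lam0 : R, 0 < lam0 /\
  forall lam : R, lam0 <= lam ->
  forall b1 b2 : R, 0 < b1 -> b1 < b2 -> G lam b1 < G lam b2.
Proof.
  assert (Hthreshold : 0 < 4 / Phi 0 ^ 2) by (apply Rdiv_lt_0_compat; [lra | apply pow_lt, Phi_0_pos]).
  exists (4 / Phi 0 ^ 2 + 1); split; [lra |].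
  intros lam Hlam b1 b2 Hb1 Hb12.
  destruct (MVT_cor2 (G lam) (dG lam) b1 b2 Hb12) as [c [Hmvt Hc]].
  { intros c Hc; apply is_derive_Reals, G_derive; lra. }
  assert (0 < dG lam c) by (apply dG_pos; lra).
  assert (0 < G lam b2 - G lam b1) by (rewrite Hmvt; apply Rmult_lt_0_compat; lra).
  lra.
Qed.
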